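(* Let $F$, $\hat F$, $\alpha_1,\dots,\alpha_n$ and $\pi: H_1(\hat F,\mathbb{Z})\to H_1(F,\mathbb{Z})$ be as in the context. For every automorphism $\varphi: H_1(F,\mathbb{Z})\to H_1(F,\mathbb{Z})$ there is an automorphism $\tilde\varphi: H_1(\hat F,\mathbb{Z})\to H_1(\hat F,\mathbb{Z})$ with $\pi\circ\tilde\varphi=\varphi\circ\pi$ and $\tilde\varphi\left(\sum_{i=1}^n\alpha_i\right)=\sum_{i=1}^n\alpha_i$.
   Context: $F$ is a closed connected non-orientable surface with Euler characteristic $\chi(F)=2-n$, $n\ge 1$, written as a connected sum of $n$ projective planes. $\hat F$ is obtained from $F$ by deleting the interior of an embedded disc, so $\hat F$ is a boundary-connected sum of $n$ Möbius bands $\mathcal{M}_1,\dots,\mathcal{M}_n$. Let $\gamma_i$ be the core (central) circle of $\mathcal{M}_i$ and $\alpha_i=[\gamma_i]\in H_1(\hat F,\mathbb{Z})$ (for some choice of orientation). Then $H_1(\hat F,\mathbb{Z})\cong\mathbb{Z}^n$ with basis $\alpha_1,\dots,\alpha_n$, and the map $\pi:H_1(\hat F,\mathbb{Z})\to H_1(F,\mathbb{Z})$ induced by inclusion is surjective with kernel generated by $2\sum_i\alpha_i$ (the class of the boundary circle), so $H_1(F,\mathbb{Z})=H_1(\hat F,\mathbb{Z})/\langle 2\sum_i\alpha_i\rangle$. *)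

From HB Require Import structures.
From mathcomp Require Import all_boot all_order all_algebra.
Set Implicit Arguments. Unset Strict Implicit. Unset Printing Implicit Defensive.
Import GRing.Theory.
Local Open Scope ring_scope.

(* H_1(\hat F, Z) = Z^n, modelled as integer row vectors; alpha i is the
   i-th standard basis vector (class of the core circle of M_i). *)
Definition H1hat (n : nat) := 'rV[int]_n.
Definition alpha (n : nat) (i : 'I_n) : 'rV[int]_n := delta_mx 0 i.
Definition alpha_sum (n : nat) : 'rV[int]_n := \sum_(i < n) alpha i.

Definition is_hom (G H : zmodType) (f : G -> H) : Prop :=
  forall x y, f (x + y) = f x + f y.

Definition is_aut (G : zmodType) (f : G -> G) : Prop :=
  is_hom f /\ bijective f.

(* Since pi (2 alpha_sum) = 0 and ker pi is generated by 2 alpha_sum, the element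
   pi alpha_sum is the only nonzero element of G killed by 2, so every automorphism
   of G fixes it.  Lifting phi (pi alpha_i) for each i and correcting one lift by
   an element of ker pi therefore yields a lift of phi fixing alpha_sum.  Lifts of
   phi and phi^-1 compose to lifts of the identity fixing alpha_sum, and such a
   lift h is invertible: h - 1 takes values in ker pi = Z (2 alpha_sum) and
   vanishes there, so 2 - h is its inverse. *)

From HB Require Import structures.
From mathcomp Require Import all_boot all_algebra.
From mathcomp Require Import zify.
Import GRing.Theory Num.Theory.
Set Implicit Arguments.
Unset Strict Implicit.
Unset Printing Implicit Defensive.

Local Open Scope ring_scope.

Section IsHom.
Variables (U V : zmodType) (f : U -> V).
Hypothesis f_hom : is_hom f.

Lemma is_hom_nmod_morphism : nmod_morphism f.
Proof.
split=> //; apply: (@addrI _ (f 0)).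
by rewrite -f_hom !addr0.
Qed.

Let fA : {additive U -> V} :=
  HB.pack f (GRing.isNmodMorphism.Build U V f is_hom_nmod_morphism).

Lemma is_hom0 : f 0 = 0. Proof. exact: (raddf0 fA). Qed.
Lemma is_homB x y : f (x - y) = f x - f y. Proof. exact: (raddfB fA). Qed.
Lemma is_homMn x m : f (x *+ m) = f x *+ m. Proof. exact: (raddfMn fA). Qed.
Lemma is_homMz x k : f (x *~ k) = f x *~ k. Proof. exact: (raddfMz fA). Qed.

Lemma is_hom_sum (I : Type) (r : seq I) (P : pred I) (F : I -> U) :
  f (\sum_(i <- r | P i) F i) = \sum_(i <- r | P i) f (F i).
Proof. exact: (raddf_sum fA). Qed.

Lemma is_hom_inv (g : V -> U) : cancel f g -> cancel g f -> is_hom g.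
Proof. by move=> fK gK x y; apply: (can_inj fK); rewrite f_hom !gK. Qed.

End IsHom.

Lemma bijective_of_comp (T1 T2 : Type) (f : T1 -> T2) (g : T2 -> T1) :
  bijective (f \o g) -> bijective (g \o f) -> bijective f.
Proof.
move=> [u fgK uK] [v gfK vK].
have f_inj : injective f by apply: (inj_compr (f := g)); exact: can_inj gfK.
exists (g \o u) => [x | y]; last exact: uK.
by apply: f_inj; rewrite [f _](uK (f x)).
Qed.

Lemma lift_family_with_sum (U G : zmodType) (pi : U -> G) (I : finType) (i0 : I) :
  is_hom pi -> (forall g, exists x, pi x = g) ->
  forall (g : I -> G) (t : U), pi t = \sum_i g i ->
  exists y : I -> U, (forall i, pi (y i) = g i) /\ \sum_i y i = t.
Proof.
move=> pi_hom pi_surj g t pit.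
have [y0 y0E] := fin_all_exists (fun i => pi_surj (g i)).
pose d := \sum_i y0 i - t.
have pi_d : pi d = 0.
  rewrite (is_homB pi_hom) (is_hom_sum pi_hom).
  by under eq_bigr do rewrite y0E; rewrite pit subrr.
exists (fun i => y0 i - d *+ (i == i0)); split.
  by move=> i; rewrite (is_homB pi_hom) (is_homMn pi_hom) y0E pi_d mul0rn subr0.
rewrite sumrB; under [\sum_i d *+ _]eq_bigr do rewrite mulrb.
by rewrite -big_mkcond big_pred1_eq opprB addrC subrK.
Qed.

Lemma hom_bijective_mod_cyclic (U G : zmodType) (pi : U -> G) (c : U) (h : U -> U) :
  is_hom pi -> (forall x, pi x = 0 -> exists k : int, x = c *~ k) ->
  is_hom h -> (forall x, pi (h x) = pi x) -> h c = c -> bijective h.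
Proof.
move=> pi_hom pi_ker h_hom h_pi hc.
have hK x : h (h x - x) = h x - x.
  have /pi_ker [k ->] : pi (h x - x) = 0 by rewrite (is_homB pi_hom) h_pi subrr.
  by rewrite (is_homMz h_hom) hc.
exists (fun x => x - (h x - x)) => x.
  by rewrite -(is_homB h_hom) hK opprB addrC subrK.
by rewrite (is_homB h_hom) hK opprB addrC subrK.
Qed.

Lemma alpha_sum_entry n j : alpha_sum n 0 j = 1.
Proof.
rewrite /alpha_sum summxE (bigD1 j) //= big1 => [|i ij]; rewrite mxE ?eqxx ?addr0 //.
by rewrite eq_sym (negbTE ij) andbF.
Qed.

Lemma is_hom_row_ext n (G : zmodType) (h1 h2 : 'rV[int]_n -> G) :
  is_hom h1 -> is_hom h2 -> (forall i, h1 (alpha i) = h2 (alpha i)) -> h1 =1 h2.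
Proof.
move=> h1_hom h2_hom h12 x; rewrite [x]row_sum_delta.
rewrite (is_hom_sum h1_hom) (is_hom_sum h2_hom); apply: eq_bigr => i _.
by rewrite -[x 0 i]intz !scaler_int (is_homMz h1_hom) (is_homMz h2_hom) h12.
Qed.

Lemma int_mx_mulr2n_inj m n (x y : 'M[int]_(m, n)) : x *+ 2 = y *+ 2 -> x = y.
Proof.
move=> /eqP; rewrite -subr_eq0 -mulrnBl => /eqP xy2.
apply/eqP; rewrite -subr_eq0; apply/eqP/matrixP => i j.
have /eqP := congr1 (fun z : 'M[int]_(m, n) => z i j) xy2.
by rewrite !mxE -mulr2n mulrn_eq0 => /eqP.
Qed.

Lemma mxE_mulrz m n (A : 'M[int]_(m, n)) k i j : (A *~ k) i j = A i j *~ k.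
Proof. by rewrite -scaler_int mxE mulrzl. Qed.

Lemma mulrz_mod2 (M : zmodType) (a : M) (k : int) :
  a *+ 2 = 0 -> a *~ k = a *~ (k %% 2)%Z.
Proof.
move=> a2; have a2z : a *~ 2 = 0 := a2.
by rewrite {1}(divz_eq k 2) mulrzDr mulrzA mulrzAC a2z mul0rz add0r.
Qed.

Section Lifting.
Variables (n : nat) (G : zmodType) (pi : 'rV[int]_n -> G).
Hypothesis n_gt0 : (0 < n)%N.
Hypothesis pi_hom : is_hom pi.
Hypothesis pi_surj : forall g : G, exists x, pi x = g.
Hypothesis pi_ker : forall x, pi x = 0 <-> exists k : int, x = (alpha_sum n *+ 2) *~ k.

Local Notation s := (alpha_sum n).

Lemma pi_alpha_sum_mulr2n : pi s *+ 2 = 0.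
Proof. by rewrite -(is_homMn pi_hom); apply/pi_ker; exists 1. Qed.

Lemma pi_alpha_sum_neq0 : pi s != 0.
Proof.
apply/eqP => /pi_ker [k /(congr1 (fun v : 'rV[int]_n => v 0 (Ordinal n_gt0)))].
rewrite mxE_mulrz mxE alpha_sum_entry mulrzz; lia.
Qed.

Lemma two_torsion_pi (g : G) : g *+ 2 = 0 -> g = 0 \/ g = pi s.
Proof.
have [x <-] := pi_surj g; rewrite -(is_homMn pi_hom) => /pi_ker [k].
rewrite !pmulrn mulrzAC -pmulrn => /int_mx_mulr2n_inj ->.
rewrite (is_homMz pi_hom) (mulrz_mod2 _ pi_alpha_sum_mulr2n).
have k2_ge0 := @modz_ge0 k 2 isT; have k2_lt2 := @ltz_pmod k 2 isT.
have [->|->] : (k %% 2)%Z = 0 \/ (k %% 2)%Z = 1 by lia.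
  by left; rewrite mulr0z.
by right; rewrite mulr1z.
Qed.

Lemma is_aut_fix_pi_alpha_sum (ph : G -> G) : is_aut ph -> ph (pi s) = pi s.
Proof.
move=> [ph_hom /bij_inj ph_inj].
have : ph (pi s) *+ 2 = 0 by rewrite -(is_homMn ph_hom) pi_alpha_sum_mulr2n (is_hom0 ph_hom).
case/two_torsion_pi => // ph0; have := pi_alpha_sum_neq0.
by rewrite -(is_hom0 ph_hom) in ph0; rewrite (ph_inj _ _ ph0) eqxx.
Qed.

Lemma exists_lift (ph : G -> G) : is_hom ph -> ph (pi s) = pi s ->
  exists f : 'rV[int]_n -> 'rV[int]_n,
    [/\ is_hom f, forall x, pi (f x) = ph (pi x) & f s = s].
Proof.
move=> ph_hom ph_s.
have pi_s : pi s = \sum_i ph (pi (alpha i)).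
  by rewrite -(is_hom_sum ph_hom) -(is_hom_sum pi_hom) -/(alpha_sum n) ph_s.
have [y [yE y_sum]] := lift_family_with_sum (Ordinal n_gt0) pi_hom pi_surj pi_s.
exists (mulmx^~ (\matrix_i y i)); split.
- by move=> u v; rewrite mulmxDl.
- apply: is_hom_row_ext => [u v | u v | i]; rewrite /= ?mulmxDl ?pi_hom ?ph_hom //.
  by rewrite -rowE rowK yE.
- rewrite mulmx_sum_row -[RHS]y_sum; apply: eq_bigr => i _.
  by rewrite alpha_sum_entry scale1r rowK.
Qed.

Lemma lift_id_bijective (h : 'rV[int]_n -> 'rV[int]_n) :
  is_hom h -> (forall x, pi (h x) = pi x) -> h s = s -> bijective h.
Proof.
move=> h_hom h_pi h_s.
apply: (hom_bijective_mod_cyclic (c := s *+ 2) pi_hom _ h_hom h_pi).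
  by move=> x /pi_ker.
by rewrite (is_homMn h_hom) h_s.
Qed.

End Lifting.

Theorem lemma2p1 (n : nat) (hn : (1 <= n)%N) (G : zmodType)
    (pi : 'rV[int]_n -> G)
    (pi_hom : is_hom pi)
    (pi_surj : forall g : G, exists x, pi x = g)
    (pi_ker : forall x, pi x = 0 <-> exists k : int, x = (alpha_sum n *+ 2) *~ k)
    (phi : G -> G) (phi_aut : is_aut phi) :
  exists phit : 'rV[int]_n -> 'rV[int]_n,
    [/\ is_aut phit,
        forall x, pi (phit x) = phi (pi x)
      & phit (alpha_sum n) = alpha_sum n].
Proof.
have [phi_hom [psi phiK psiK]] := phi_aut.
have psi_aut : is_aut psi by split; [apply: (is_hom_inv phi_hom phiK psiK) | exists phi].
have lift ph (ph_aut : is_aut ph) := exists_lift hn pi_hom pi_surj ph_aut.1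
  (is_aut_fix_pi_alpha_sum hn pi_hom pi_surj pi_ker ph_aut).
have [f [f_hom f_pi f_s]] := lift _ phi_aut.
have [g [g_hom g_pi g_s]] := lift _ psi_aut.
exists f; split=> //; split=> //.
apply: (bijective_of_comp (g := g));
  apply: (lift_id_bijective pi_hom pi_ker) => [u v | x | ] /=.
- by rewrite g_hom f_hom.
- by rewrite f_pi g_pi psiK.
- by rewrite g_s f_s.
- by rewrite f_hom g_hom.
- by rewrite g_pi f_pi phiK.
- by rewrite f_s g_s.
Qed.
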